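(* Let $P$ be a finite $p$-group, $\mathcal F$ a saturated fusion system (Frobenius $P$-category) over $P$, and $\mathcal F^*$ the full subcategory of $\mathcal F$ on the nonidentity subgroups of $P$. Then the function \[ k_K=\frac{-\mu(K)}{|\mathcal F^*(K,P)|},\qquad K\in\mathrm{Ob}(\mathcal F^* ), \] is a coweighting for $\mathcal F^*$, the Euler characteristic of $\mathcal F^*$ is \[ \chi(\mathcal F^* )=\sum_{[K]\in[\mathcal F^*]}\frac{-\mu(K)}{|\mathcal F^*(K)|}, \] and $\chi(\mathcal F^* )\in\mathbb Z_{(p)}$ is a $p$-local integer.
   Context: A fusion system $\mathcal F$ over a finite $p$-group $P$ is a category whose objects are the subgroups of $P$ and whose morphism sets $\mathcal F(Q,R)$ are sets of injective group homomorphisms $Q\to R$ such that: $\mathcal F(Q,R)$ contains all conjugation maps $x\mapsto g^{-1}xg$ by $g\in P$ with $g^{-1}Qg\le R$; every morphism is the composite of an $\mathcal F$-isomorphism onto its image followed by an inclusion; and inverses of $\mathcal F$-isomorphisms lie in $\mathcal F$. It is saturated (equivalently, a Frobenius $P$-category in Puig's sense) if (I) for every subgroup $Q$ that is fully normalized in $\mathcal F$ (i.e. $|N_P(Q)|\ge|N_P(Q')|$ for all $Q'$ $\mathcal F$-isomorphic to $Q$), $Q$ is fully centralized ($|C_P(Q)|\ge|C_P(Q')|$ for all such $Q'$) and $\mathrm{Aut}_P(Q)$ is a Sylow $p$-subgroup of $\mathcal F(Q,Q)$; and (II) every $\varphi\in\mathcal F(Q,P)$ with $\varphi(Q)$ fully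 centralized extends to a morphism in $\mathcal F(N_\varphi,P)$, where $N_\varphi=\{g\in N_P(Q):\varphi c_g\varphi^{-1}\in\mathrm{Aut}_P(\varphi(Q))\}$. $\mathcal F^*(K)=\mathcal F^*(K,K)$, and $[\mathcal F^*]$ is the set of isomorphism classes of objects of $\mathcal F^*$. $\mu(K)=\mu(1,K)$ is the Möbius function of the poset of subgroups of $K$ ($\mu(H,H)=1$, $\mu(H,K)=-\sum_{H\le L<K}\mu(H,L)$ for $H<K$). Leinster: a coweighting of a finite category $\mathcal C$ is $k_\bullet$ with $\sum_ak_a|\mathcal C(a,b)|=1$ for all $b$, a weighting is $k^\bullet$ with $\sum_b|\mathcal C(a,b)|k^b=1$ for all $a$; if both exist $\chi(\mathcal C)=\sum k_a=\sum k^b$. $\mathbb Z_{(p)}$ is the ring of rationals with denominator prime to $p$. *)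

From HB Require Import structures.
From mathcomp Require Import all_boot all_order all_algebra all_fingroup all_solvable.
Set Implicit Arguments. Unset Strict Implicit. Unset Printing Implicit Defensive.
Import GRing.Theory Num.Theory.

Section FusionDefs.
Variable gT : finGroupType.
Local Open Scope group_scope.

(* Morphisms Q -> R are encoded as finite functions gT -> gT that are
   injective homomorphisms on Q, map Q into R, and are 1 outside Q. *)
Definition restrict (Q : {set gT}) (f : gT -> gT) : {ffun gT -> gT} :=
  [ffun x => if x \in Q then f x else 1].

Definition conjmap (Q : {set gT}) (g : gT) : {ffun gT -> gT} :=
  restrict Q (fun x => x ^ g).

Definition injhom (Q R : {set gT}) : {set {ffun gT -> gT}} :=
  [set f : {ffun gT -> gT} |
    [&& [forall x in Q, forall y in Q, f (x * y) == f x * f y],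
        [forall x in Q, forall y in Q, (f x == f y) ==> (x == y)],
        [forall x in Q, f x \in R] &
        [forall x in ~: Q, f x == 1]]].

Definition compmap (Q : {set gT}) (f g : {ffun gT -> gT}) : {ffun gT -> gT} :=
  restrict Q (fun x => g (f x)).

Definition invmap (Q : {set gT}) (f : {ffun gT -> gT}) : {ffun gT -> gT} :=
  [ffun y => if y \in f @: Q then odflt 1 [pick x in Q | f x == y] else 1].

Definition subgp (P Q : {set gT}) : bool := group_set Q && (Q \subset P).

Record fusion_system (P : {group gT})
    (F : {set gT} -> {set gT} -> {set {ffun gT -> gT}}) : Prop := {
  fs_hom : forall Q R, subgp P Q -> subgp P R -> F Q R \subset injhom Q R;
  fs_conj : forall Q R g, subgp P Q -> subgp P R -> g \in P ->
     Q :^ g \subset R -> conjmap Q g \in F Q R;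
  fs_comp : forall Q R S f g, subgp P Q -> subgp P R -> subgp P S ->
     f \in F Q R -> g \in F R S -> compmap Q f g \in F Q S;
  fs_factor : forall Q R f, subgp P Q -> subgp P R ->
     f \in F Q R -> f \in F Q (f @: Q);
  fs_inv : forall Q R f, subgp P Q -> subgp P R ->
     f \in F Q R -> f @: Q = R -> invmap Q f \in F R Q
}.

Definition Fiso (F : {set gT} -> {set gT} -> {set {ffun gT -> gT}})
    (Q Q' : {set gT}) : bool :=
  [exists f in F Q Q', f @: Q == Q'].

Definition fully_normalized (P : {set gT}) F (Q : {set gT}) : Prop :=
  forall Q', subgp P Q' -> Fiso F Q Q' -> #|'N_P(Q')| <= #|'N_P(Q)|.

Definition fully_centralized (P : {set gT}) F (Q : {set gT}) : Prop :=
  forall Q', subgp P Q' -> Fiso F Q Q' -> #|'C_P(Q')| <= #|'C_P(Q)|.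

(* Aut_F(Q) = F(Q,Q), realised as permutations of gT fixing gT \ Q pointwise *)
Definition AutF (F : {set gT} -> {set gT} -> {set {ffun gT -> gT}})
    (Q : {set gT}) : {set {perm gT}} :=
  [set s : {perm gT} | (restrict Q s \in F Q Q) && [forall x in ~: Q, s x == x]].

Definition AutP (P Q : {set gT}) : {set {perm gT}} :=
  [set s : {perm gT} | [exists g in 'N_P(Q), restrict Q s == conjmap Q g]
                        && [forall x in ~: Q, s x == x]].

(* N_phi = { g in N_P(Q) : phi c_g phi^-1 in Aut_P(phi(Q)) } *)
Definition Nphi (P Q : {set gT}) (f : {ffun gT -> gT}) : {set gT} :=
  [set g in 'N_P(Q) | [exists h in 'N_P(f @: Q),
      [forall y in f @: Q, f (invmap Q f y ^ g) == y ^ h]]].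

Record saturated (p : nat) (P : {group gT})
    (F : {set gT} -> {set gT} -> {set {ffun gT -> gT}}) : Prop := {
  sat_fs : fusion_system P F;
  sat_I : forall Q, subgp P Q -> fully_normalized P F Q ->
     fully_centralized P F Q /\ p.-Sylow(AutF F Q) (AutP P Q);
  sat_II : forall Q f, subgp P Q -> f \in F Q P ->
     fully_centralized P F (f @: Q) ->
     exists2 g, g \in F (Nphi P Q f) P & {in Q, forall x, g x = f x}
}.

(* Moebius function of the subgroup poset, by well-founded recursion (fuel) *)
Fixpoint mob_rec (n : nat) (H K : {set gT}) : int :=
  match n with
  | 0 => 0%R
  | n'.+1 => if H == K then 1%R
             else if H \subset K then
               (- \sum_(L : {group gT} | (H \subset L) && (L \proper K)) mob_rec n' H L)%R
             else 0%R
  end.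
Definition mobius (H K : {set gT}) : int := mob_rec #|K|.+1 H K.
Definition mu (K : {set gT}) : int := mobius [1 gT] K.

Definition Fstar_ob (P : {set gT}) : {set {set gT}} :=
  [set K : {set gT} | subgp P K && (K != [1 gT])].

Definition Fstar_classes (P : {set gT}) F : {set {set {set gT}}} :=
  [set [set L in Fstar_ob P | Fiso F K L] | K in Fstar_ob P].

Definition class_rep (C : {set {set gT}}) : {set gT} := odflt set0 [pick K in C].

End FusionDefs.

(* Leinster: weightings, coweightings, Euler characteristic of a finite
   category with objects Ob and hom-set cardinalities hom. *)
Section Leinster.
Variable I : finType.
Local Open Scope ring_scope.

Definition coweighting (Ob : {set I}) (hom : I -> I -> nat) (k : I -> rat) : Prop :=
  forall b, b \in Ob -> \sum_(a in Ob) k a * (hom a b)%:R = 1.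

Definition weighting (Ob : {set I}) (hom : I -> I -> nat) (k : I -> rat) : Prop :=
  forall a, a \in Ob -> \sum_(b in Ob) (hom a b)%:R * k b = 1.

Definition euler_char (Ob : {set I}) (hom : I -> I -> nat) (x : rat) : Prop :=
  (exists kw, weighting Ob hom kw) /\
  (exists2 kc, coweighting Ob hom kc & \sum_(a in Ob) kc a = x).

End Leinster.

Definition p_local_integer (p : nat) (x : rat) : bool := ~~ (p %| `|denq x|)%N.

(* Grouping the F-morphisms a -> b by their image gives
   |F(a,b)| = sum_{K <= b} |Iso_F(a,K)|.  Since mu and |F(-,P)| are constant on
   F-isomorphism classes and sum_a |Iso_F(a,K)| = |F(K,P)|, the coweighting
   identity at b collapses to sum_{1 < K <= b} -mu(K) = mu(1) = 1; a weighting is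
   obtained by Moebius inversion of K |-> 1/|F(K,P)| along the subgroup order, and
   summing the coweighting class by class gives the formula for chi.
   For p-locality, a Sylow p-subgroup S of Aut_F(K) acts faithfully on the
   p-group K and |S| divides mu(K): mu vanishes unless K is elementary abelian,
   and then Weisner's theorem for a nontrivial S-fixed cyclic subgroup Z writes
   mu(K) as minus the sum of mu over the proper supplements of Z, which S permutes;
   induction on |K| applies to each point stabiliser. *)
From HB Require Import structures.
From mathcomp Require Import all_boot all_order all_algebra all_fingroup all_solvable.
From mathcomp Require Import ring zify.
Import GRing.Theory Num.Theory.

Set Implicit Arguments.
Unset Strict Implicit.
Unset Printing Implicit Defensive.

Section Homomorphisms.
Variable gT : finGroupType.
Local Open Scope group_scope.
Implicit Types (Q R : {set gT}) (f : gT -> gT).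

Lemma injhomP Q R (f : {ffun gT -> gT}) : f \in injhom Q R ->
  [/\ {in Q &, forall x y, f (x * y) = f x * f y},
      {in Q &, injective f}, {in Q, forall x, f x \in R} &
      forall x, x \notin Q -> f x = 1].
Proof.
rewrite inE => /and4P[/forall_inP hM /forall_inP hI /forall_inP hR /forall_inP h1].
split=> [x y xQ yQ | x y xQ yQ fxy | // | x xQ].
- by apply/eqP; have /forall_inP := hM x xQ; apply.
- by apply/eqP; have /forall_inP/(_ y yQ)/implyP := hI x xQ; apply; rewrite fxy.
- by apply/eqP; apply: h1; rewrite inE.
Qed.

Section Morphic.
Variables (Q : {set gT}) (f : gT -> gT).
Hypotheses (gQ : group_set Q) (fM : {in Q &, forall x y, f (x * y) = f x * f y}).

Lemma in_morph1 : f 1 = 1.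
Proof.
have Q1 : 1 \in Q by case/andP: gQ.
by apply: (mulgI (f 1)); rewrite -fM // !mulg1.
Qed.

Lemma in_morphX x n : x \in Q -> f (x ^+ n) = f x ^+ n.
Proof.
move=> xQ; elim: n => [|n IHn]; first by rewrite !expg0 in_morph1.
by rewrite !expgS fM ?IHn // (@groupX _ (Group gQ)).
Qed.

Lemma group_set_imset : group_set (f @: Q).
Proof.
have /andP[Q1 QM] := gQ.
apply/andP; split; first by apply/imsetP; exists 1; rewrite ?in_morph1.
apply/subsetP=> _ /mulsgP[_ _ /imsetP[x xQ ->] /imsetP[y yQ ->] ->].
by rewrite -fM //; apply: imset_f; apply: (subsetP QM); apply: mem_mulg.
Qed.

Lemma imset_mulg_in (A B : {set gT}) : A \subset Q -> B \subset Q ->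
  f @: (A * B) = (f @: A) * (f @: B).
Proof.
move=> AQ BQ; apply/setP=> y; apply/imsetP/mulsgP.
  case=> _ /mulsgP[a b aA bB ->] ->.
  by exists (f a) (f b); rewrite ?imset_f ?fM ?(subsetP AQ a aA) ?(subsetP BQ b bB).
case=> _ _ /imsetP[a aA ->] /imsetP[b bB ->] ->.
by exists (a * b); rewrite ?mem_mulg ?fM ?(subsetP AQ a aA) ?(subsetP BQ b bB).
Qed.

End Morphic.

Section InverseMap.
Variables (Q : {set gT}) (f : {ffun gT -> gT}).
Hypothesis f_inj : {in Q &, injective f}.

Lemma invmapK x : x \in Q -> invmap Q f (f x) = x.
Proof.
move=> xQ; rewrite /invmap ffunE imset_f //.
by case: pickP => [x' /andP[x'Q /eqP/f_inj->] | /(_ x)] //; rewrite xQ eqxx.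
Qed.

Lemma invmapP y : y \in f @: Q -> invmap Q f y \in Q /\ f (invmap Q f y) = y.
Proof. by case/imsetP=> x xQ ->; rewrite invmapK. Qed.

Lemma invmap_out y : y \notin f @: Q -> invmap Q f y = 1.
Proof. by move=> yQ; rewrite /invmap ffunE (negPf yQ). Qed.

Lemma invmap_imset : invmap Q f @: (f @: Q) = Q.
Proof.
apply/setP=> x; apply/imsetP/idP=> [[y /invmapP[] ? _ -> //] | xQ].
by exists (f x); rewrite ?imset_f ?invmapK.
Qed.

Lemma invmap_inj : {in f @: Q &, injective (invmap Q f)}.
Proof.
move=> y1 y2 /invmapP[_ fy1] /invmapP[_ fy2] e.
by rewrite -fy1 -fy2 e.
Qed.

End InverseMap.

Lemma invmap_invmap Q (f : {ffun gT -> gT}) :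
  {in Q &, injective f} -> (forall x, x \notin Q -> f x = 1) ->
  invmap (f @: Q) (invmap Q f) = f.
Proof.
move=> f_inj f_out; apply/ffunP=> x; have [xQ | xQ] := boolP (x \in Q).
  by rewrite -{1}(invmapK f_inj xQ) (invmapK (invmap_inj f_inj)) ?imset_f.
by rewrite f_out // invmap_out // invmap_imset.
Qed.

Lemma compmap_imset Q (f g : {ffun gT -> gT}) : compmap Q f g @: Q = g @: (f @: Q).
Proof.
rewrite -imset_comp; apply: eq_in_imset => x xQ.
by rewrite /compmap /restrict ffunE xQ.
Qed.

End Homomorphisms.

Section FusionSystem.
Variable gT : finGroupType.
Local Open Scope group_scope.
Implicit Types Q R K L X : {set gT}.
Variables (P : {group gT}) (F : {set gT} -> {set gT} -> {set {ffun gT -> gT}}).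
Hypothesis FS : fusion_system P F.
Local Notation sub := (subgp P).

Lemma subgp_trans b K : sub b -> subgp b K -> sub K.
Proof. by case/andP=> _ bP /andP[gK Kb]; rewrite /subgp gK (subset_trans Kb bP). Qed.

Lemma subgp1 : sub 1.
Proof. by rewrite /subgp group_set_one sub1G. Qed.

Lemma subgp_refl : sub P.
Proof. by rewrite /subgp groupP subxx. Qed.

Lemma F_homP Q R f : sub Q -> sub R -> f \in F Q R ->
  [/\ {in Q &, forall x y, f (x * y) = f x * f y},
      {in Q &, injective f}, {in Q, forall x, f x \in R} &
      forall x, x \notin Q -> f x = 1].
Proof. by move=> sQ sR fF; apply: injhomP; apply: (subsetP (fs_hom FS sQ sR)). Qed.

Lemma F_imset Q R f : sub Q -> sub R -> f \in F Q R ->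
  [/\ sub (f @: Q), f @: Q \subset R & #|f @: Q| = #|Q|].
Proof.
move=> sQ sR fF; have [fM f_inj fR _] := F_homP sQ sR fF.
have fQR : f @: Q \subset R by apply/subsetP=> _ /imsetP[x xQ ->]; apply: fR.
split=> //; last exact: card_in_imset.
rewrite /subgp group_set_imset //; last by case/andP: sQ.
by case/andP: sR => _ RP; rewrite (subset_trans fQR).
Qed.

Lemma incl_in_F Q R : sub Q -> sub R -> Q \subset R -> restrict Q id \in F Q R.
Proof.
move=> sQ sR QR; have -> : restrict Q id = conjmap Q 1.
  by apply/ffunP=> x; rewrite !ffunE conjg1.
by apply: (fs_conj FS sQ sR (group1 P)); rewrite conjsg1.
Qed.

Lemma card_F_gt0 Q R : sub Q -> sub R -> Q \subset R -> 0 < #|F Q R|.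
Proof. by move=> sQ sR QR; apply/card_gt0P; exists (restrict Q id); apply: incl_in_F. Qed.

Lemma F_widen Q R S f : sub Q -> sub R -> sub S -> R \subset S ->
  f \in F Q R -> f \in F Q S.
Proof.
move=> sQ sR sS RS fF; have := fs_comp FS sQ sR sS fF (incl_in_F sR sS RS).
suff -> : compmap Q f (restrict R id) = f by [].
have [_ _ fR f_out] := F_homP sQ sR fF.
apply/ffunP=> x; rewrite /compmap /restrict !ffunE.
by case: ifP => xQ; [rewrite fR | rewrite f_out ?xQ].
Qed.

Definition Fisos Q K := [set f in F Q K | f @: Q == K].

Lemma FisoE Q K : Fiso F Q K = (Fisos Q K != set0).
Proof.
apply/exists_inP/set0Pn=> [[f fF fK] | [f]]; first by exists f; rewrite inE fF.
by rewrite inE => /andP[]; exists f.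
Qed.

Lemma Fisos_narrow Q b K : sub Q -> sub b -> subgp b K ->
  [set f in F Q b | f @: Q == K] = Fisos Q K.
Proof.
move=> sQ sb bK; have sK := subgp_trans sb bK.
apply/setP=> f; rewrite !inE; apply/andP/andP=> -[fF fK]; split=> //.
  by rewrite -(eqP fK); apply: (fs_factor FS sQ sb).
by apply: (F_widen sQ sK sb _ fF); case/andP: bK.
Qed.

Lemma card_F_by_image Q b : sub Q -> sub b ->
  #|F Q b| = \sum_(K : {set gT} | subgp b K) #|Fisos Q K|.
Proof.
move=> sQ sb; rewrite -sum1_card.
rewrite (partition_big (fun f : {ffun gT -> gT} => f @: Q) (subgp b)) /=.
  apply: eq_bigr => K bK; rewrite -(Fisos_narrow sQ sb bK) sum1_card.
  by apply: eq_card => f; rewrite inE.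
move=> f fF; have [/andP[gfQ _] fQb _] := F_imset sQ sb fF.
by rewrite /subgp gfQ fQb.
Qed.

Lemma Fiso_card Q K : sub Q -> sub K -> Fiso F Q K -> #|Q| = #|K|.
Proof.
move=> sQ sK /exists_inP[f fF /eqP fK].
by have [_ _ <-] := F_imset sQ sK fF; rewrite fK.
Qed.

Lemma Fisos_eq0 Q K : sub Q -> sub K -> #|Q| != #|K| -> Fisos Q K = set0.
Proof.
move=> sQ sK QK; apply/eqP; apply: contraR QK; rewrite -FisoE => isoQK.
by rewrite (Fiso_card sQ sK isoQK).
Qed.

Lemma Fisos_full Q K : sub Q -> sub K -> #|Q| = #|K| -> Fisos Q K = F Q K.
Proof.
move=> sQ sK QK; apply/setP=> f; rewrite inE; case fF: (f \in F Q K) => //=.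
have [_ fQK fQ] := F_imset sQ sK fF.
by rewrite eqEcard fQK fQ QK leqnn.
Qed.

Lemma Fiso_refl Q : sub Q -> Fiso F Q Q.
Proof.
move=> sQ; apply/exists_inP; exists (restrict Q id); first exact: incl_in_F.
apply/eqP/setP=> x; apply/imsetP/idP=> [[y yQ ->] | xQ]; first by rewrite ffunE yQ.
by exists x; rewrite // ffunE xQ.
Qed.

Lemma Fiso_sym Q K : sub Q -> sub K -> Fiso F Q K -> Fiso F K Q.
Proof.
move=> sQ sK /exists_inP[f fF /eqP fK]; apply/exists_inP; exists (invmap Q f).
  exact: (fs_inv FS sQ sK fF fK).
have [_ f_inj _ _] := F_homP sQ sK fF.
by rewrite -fK invmap_imset.
Qed.

Lemma Fiso_trans Q K L : sub Q -> sub K -> sub L ->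
  Fiso F Q K -> Fiso F K L -> Fiso F Q L.
Proof.
move=> sQ sK sL /exists_inP[f fF /eqP fK] /exists_inP[g gF /eqP gL].
apply/exists_inP; exists (compmap Q f g); first exact: (fs_comp FS sQ sK sL fF gF).
by rewrite compmap_imset fK gL.
Qed.

Lemma card_Fisos_sym Q K : sub Q -> sub K -> #|Fisos Q K| = #|Fisos K Q|.
Proof.
have le Q' K' : sub Q' -> sub K' -> #|Fisos Q' K'| <= #|Fisos K' Q'|.
  move=> sQ sK; rewrite -(card_in_imset (f := invmap Q')); last first.
    move=> f g /setIdP[fF /eqP fK] /setIdP[gF /eqP gK] e.
    have [_ f_inj _ f_out] := F_homP sQ sK fF; have [_ g_inj _ g_out] := F_homP sQ sK gF.
    by rewrite -(invmap_invmap f_inj f_out) -(invmap_invmap g_inj g_out) fK gK e.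
  apply/subset_leq_card/subsetP=> _ /imsetP[f /setIdP[fF /eqP fK] ->].
  have [_ f_inj _ _] := F_homP sQ sK fF.
  by rewrite inE (fs_inv FS sQ sK fF fK) /= -{1}fK invmap_imset ?eqxx.
by move=> sQ sK; apply/eqP; rewrite eqn_leq !le.
Qed.

(* Precomposition with an F-isomorphism Q -> K is a bijection F(K,X) -> F(Q,X). *)
Lemma card_F_Fiso Q K X : sub Q -> sub K -> sub X -> Fiso F Q K ->
  #|F K X| = #|F Q X|.
Proof.
have le Q' K' : sub Q' -> sub K' -> sub X -> Fiso F Q' K' -> #|F K' X| <= #|F Q' X|.
  move=> sQ sK sX /exists_inP[phi phiF /eqP phiK].
  rewrite -(card_in_imset (f := compmap Q' phi)); last first.
    move=> g g' gF g'F e; apply/ffunP=> y.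
    have [_ _ _ g_out] := F_homP sK sX gF; have [_ _ _ g'_out] := F_homP sK sX g'F.
    case yK: (y \in K'); last by rewrite g_out ?g'_out ?yK.
    move: yK; rewrite -phiK => /imsetP[x xQ ->].
    by have := congr1 (fun h : {ffun gT -> gT} => h x) e; rewrite /compmap /restrict !ffunE xQ.
  apply/subset_leq_card/subsetP=> _ /imsetP[g gF ->].
  exact: (fs_comp FS sQ sK sX phiF gF).
move=> sQ sK sX isoQK; apply/eqP; rewrite eqn_leq !le //.
exact: Fiso_sym.
Qed.

End FusionSystem.

Section Moebius.
Variable gT : finGroupType.
Local Open Scope group_scope.
Implicit Types (K L M X Z : {set gT}) (f : gT -> gT).

Lemma big_group_sets (V : nmodType) (Pr : {set gT} -> bool) (F : {set gT} -> V) :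
  (\sum_(L : {group gT} | Pr L) F L = \sum_(L : {set gT} | group_set L && Pr L) F L)%R.
Proof.
symmetry; rewrite (reindex_onto (fun G : {group gT} => gval G) (fun L => insubd 1%G L)) /=.
  apply: eq_bigl => G; rewrite groupP /=.
  case: (Pr G) => //=; apply/eqP/val_inj; rewrite /= insubdK //; exact: groupP.
by move=> L /andP[gL _]; rewrite insubdK.
Qed.

Lemma mob_rec_fuel n m H K : #|K| < n -> #|K| < m -> mob_rec n H K = mob_rec m H K.
Proof.
elim: n m H K => [|n IH] [|m] H K //= Kn Km.
case: (H == K) => //; case: (H \subset K) => //; congr (- _)%R.
apply: eq_bigr => L /andP[_ /proper_card LK].
by apply: IH; [exact: leq_trans LK Kn | exact: leq_trans LK Km].
Qed.

Lemma mu1 : mu [1 gT] = 1%R.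
Proof. by rewrite /mu /mobius /= eqxx. Qed.

Lemma muE K : group_set K -> K != 1 ->
  mu K = (- \sum_(L : {set gT} | group_set L && (L \proper K)) mu L)%R.
Proof.
move=> gK nK; rewrite {1}/mu {1}/mobius /= eq_sym (negPf nK).
rewrite sub1set (group1 (Group gK)); congr (- _)%R.
rewrite (big_group_sets (fun L => ([1 gT] \subset L) && (L \proper K))).
apply: eq_big => L; first by case gL: (group_set L); rewrite //= sub1set (group1 (Group gL)).
by case/and3P=> _ _ /proper_card LK; apply: mob_rec_fuel.
Qed.

Lemma sum_mu_subgroups K : group_set K -> K != 1 ->
  (\sum_(L : {set gT} | group_set L && (L \subset K)) mu L = 0)%R.
Proof.
move=> gK nK; rewrite (bigD1 K) /= ?gK ?subxx // muE // addrC; apply/eqP.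
rewrite subr_eq0; apply/eqP/eq_bigl => L.
by rewrite properEneq; case: (group_set L); rewrite //= andbC.
Qed.

Section MoebiusImage.
Variables (Q : {set gT}) (f : gT -> gT).
Hypotheses (gQ : group_set Q) (fM : {in Q &, forall x y, f (x * y) = f x * f y}).
Hypothesis f_inj : {in Q &, injective f}.

Lemma group_set_preimset L G : group_set L -> L \subset Q -> group_set G ->
  group_set (L :&: f @^-1: G).
Proof.
move=> gL LQ gG; apply/group_setP; split.
  by rewrite !inE (group1 (Group gL)) (in_morph1 gQ fM) (group1 (Group gG)).
move=> x y; rewrite !inE => /andP[xL xG] /andP[yL yG].
have /group_setP[_ gLM] := gL; have /group_setP[_ gGM] := gG.
by rewrite gLM //= fM ?(subsetP LQ) // gGM.
Qed.

Lemma card_imset_in L : L \subset Q -> #|f @: L| = #|L|.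
Proof. by move=> LQ; apply: card_in_imset => x y /(subsetP LQ) xQ /(subsetP LQ); apply: f_inj. Qed.

Lemma mu_imset L : group_set L -> L \subset Q -> mu (f @: L) = mu L.
Proof.
have fM' M : M \subset Q -> {in M &, forall x y, f (x * y) = f x * f y}.
  by move=> MQ x y /(subsetP MQ) xQ /(subsetP MQ) yQ; apply: fM.
elim: {L}_.+1 {-2}L (ltnSn #|L|) => // n IH L Ln gL LQ.
have [-> | nL] := eqVneq L 1; first by rewrite set1gE imset_set1 (in_morph1 gQ fM).
have nfL : f @: L != 1.
  apply: contra nL => /eqP fL1; rewrite eq_sym eqEcard -(card_imset_in LQ) fL1 leqnn.
  by rewrite set1gE sub1set (group1 (Group gL)).
rewrite (muE gL nL) (muE (group_set_imset gL (fM' L LQ)) nfL); congr (- _)%R.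
rewrite (reindex_onto (fun M => f @: M) (fun M' => L :&: f @^-1: M')) /=; last first.
  move=> M' /andP[_ /properP[M'L _]]; apply/setP=> y; apply/imsetP/idP=> [[x]|yM].
    by rewrite !inE => /andP[_ ?] ->.
  by have /imsetP[x xL e] := subsetP M'L y yM; exists x; rewrite // !inE xL -e.
apply: eq_big => M; last first.
  case/andP=> /andP[gM' fML] /eqP e; have ML : M \subset L by rewrite -e subsetIl.
  have MQ := subset_trans ML LQ.
  apply: IH => //; last by rewrite -e group_set_preimset.
  rewrite -ltnS; apply: leq_trans Ln; rewrite ltnS.
  by rewrite -(card_imset_in MQ) -(card_imset_in LQ) proper_card.
apply/andP/andP=> [[/andP[gM' pM] /eqP e] | [gM /andP[ML MnL]]].
  have ML : M \subset L by rewrite -e subsetIl.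
  split; first by rewrite -e group_set_preimset.
  by rewrite properEcard ML -(card_imset_in (subset_trans ML LQ)) -(card_imset_in LQ) proper_card.
have MQ := subset_trans ML LQ; have MpL : M \proper L by rewrite properE ML.
split; first rewrite (group_set_imset gM (fM' M MQ)) /=.
  by rewrite properEcard imsetS // (card_imset_in MQ) (card_imset_in LQ) proper_card.
apply/eqP/setP=> x; rewrite !inE; apply/andP/idP=> [[xL /imsetP[m mM e]] | xM].
  by rewrite (f_inj (subsetP LQ x xL) (subsetP MQ m mM) e).
by rewrite (subsetP ML x xM) imset_f.
Qed.

End MoebiusImage.

Definition supplement_mu_sum Z M :=
  (\sum_(x : {set gT} | group_set x && (x \subset M) && (x <*> Z == M)) mu x)%R.

Lemma weisner Z M : group_set Z -> Z != 1 -> group_set M -> Z \subset M ->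
  supplement_mu_sum Z M = 0%R.
Proof.
move=> gZ nZ; elim: {M}_.+1 {-2}M (ltnSn #|M|) => // n IH M Mn gM ZM.
have nM : M != 1.
  apply: contra nZ => /eqP MZ; rewrite eqEsubset -{1}MZ ZM /=.
  by rewrite sub1set (group1 (Group gZ)).
have := sum_mu_subgroups gM nM.
rewrite (partition_big (fun x => x <*> Z)
   (fun M' => group_set M' && (Z \subset M') && (M' \subset M))) /=; last first.
  move=> x /andP[gx xM]; rewrite joing_subr groupP /=.
  by rewrite (join_subG _ _ (Group gM)) xM.
rewrite (bigD1 M) /= ?gM ?ZM ?subxx //.
set others := (X in (_ + X)%R); suff -> : others = 0%R.
  rewrite addr0 /supplement_mu_sum => h; rewrite -[RHS]h; apply: eq_bigl => x.
  by apply/andP/andP=> [[/andP[-> ->] //] | [/andP[-> _] /eqP <-]]; rewrite joing_subl.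
apply: big1 => M' /andP[/andP[/andP[gM' ZM'] M'M] nM'M].
rewrite -[RHS](IH M') //; last first.
  by apply: leq_trans (proper_card _) Mn; rewrite properEneq nM'M.
apply: eq_bigl => x; apply/andP/andP=> [[/andP[gx _] e] | [/andP[gx xM'] e]].
  by rewrite gx -(eqP e) joing_subl.
by rewrite gx (subset_trans xM' M'M).
Qed.

Lemma mu_Phi_neq1 (X : {group gT}) : 'Phi(X) != 1 -> mu X = 0%R.
Proof.
move=> nPhi; have := weisner (groupP 'Phi(X)) nPhi (groupP X) (Phi_sub X).
rewrite /supplement_mu_sum (bigD1 (X : {set gT})) /=; last first.
  by rewrite groupP subxx; apply/eqP/joing_idPl; apply: Phi_sub.
rewrite big1 ?addr0 // => x /andP[/andP[/andP[gx _] /eqP e] nx].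
have : <<x>> = X by apply: Phi_nongen; rewrite joingC.
by rewrite (genGid (Group gx)) /= => ex; rewrite ex eqxx in nx.
Qed.

Definition proper_supplements Z X :=
  [set x : {set gT} | [&& group_set x, x \subset X, x <*> Z == X & x != X]].

Lemma mu_proper_supplements (Z X : {group gT}) : Z :!=: 1 -> Z \subset X ->
  mu X = (- \sum_(x in proper_supplements Z X) mu x)%R.
Proof.
move=> nZ ZX; have := weisner (groupP Z) nZ (groupP X) ZX.
rewrite /supplement_mu_sum (bigD1 (X : {set gT})) /=; last first.
  by rewrite groupP subxx; apply/eqP/joing_idPl.
move/eqP; rewrite addr_eq0 => /eqP ->; congr (- _)%R; apply: eq_bigl => x.
by rewrite inE -!andbA.
Qed.

End Moebius.

Section PermGroupAction.
Variable gT : finGroupType.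
Local Open Scope group_scope.
Variables (X : {group gT}) (S : {group {perm gT}}).
Hypothesis S_morph : forall s, s \in S -> {in X &, forall x y, s (x * y) = s x * s y}.
Hypothesis S_X : forall s, s \in S -> s @: X \subset X.

Lemma perm_imset_eq s : s \in S -> s @: X = X.
Proof. by move=> sS; apply/eqP; rewrite eqEcard S_X //= card_imset //; apply: perm_inj. Qed.

Lemma acts_perm_group : [acts S, on X | 'P].
Proof.
apply/actsP=> s sS x /=; rewrite apermE; apply/idP/idP=> [|xX].
  by rewrite -{1}(perm_imset_eq sS) => /imsetP[y yX /perm_inj ->].
by rewrite -(perm_imset_eq sS) imset_f.
Qed.

Lemma exists_fixed_nontrivial (p : nat) : p.-group X -> p.-group S -> X :!=: 1 ->
  exists2 z, z \in X & z != 1 /\ forall s, s \in S -> s z = z.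
Proof.
move=> pX pS nX; have [p_pr p_dv_X _] := pgroup_pdiv pX nX.
have p_dv_Fix : p %| #|'Fix_(X | 'P)(S)|.
  by rewrite /dvdn -(pgroup_fix_mod pS acts_perm_group).
have [Fix_sub1 | /subsetPn[z /setIP[zX /afixP zS] nz]] :=
  boolP ('Fix_(X | 'P)(S) \subset [1 gT]).
  have Fix1 : 'Fix_(X | 'P)(S) = 1.
    apply/eqP; rewrite eqEsubset Fix_sub1 sub1set in_setI group1 /=.
    by apply/afixP=> s sS; apply: (in_morph1 (groupP X) (S_morph sS)).
  by rewrite Fix1 cards1 dvdn1 in p_dv_Fix; rewrite (eqP p_dv_Fix) in p_pr.
by exists z => //; split=> [|s /zS //]; rewrite inE in nz.
Qed.

Section Supplements.
Variable z : gT.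
Hypotheses (zX : z \in X) (z_fixed : forall s, s \in S -> s z = z) (abelX : abelian X).

Lemma cycle_subX : <[z]> \subset X.
Proof. by rewrite cycle_subG. Qed.

Lemma cycle_fixed s : s \in S -> {in <[z]>, forall y, s y = y}.
Proof. by move=> sS y /cycleP[i ->]; rewrite (in_morphX (groupP X) (S_morph sS)) ?z_fixed. Qed.

Lemma joing_cycle x : group_set x -> x \subset X -> x <*> <[z]> = x * <[z]>.
Proof.
move=> gx xX; apply: (@comm_joingE _ (Group gx) <[z]>%G); apply: normC.
apply: subset_trans xX _; apply: subset_trans abelX _.
exact: subset_trans (centS cycle_subX) (cent_sub _).
Qed.

Lemma perm_imset_supplement s x : s \in S ->
  x \in proper_supplements <[z]> X -> s @: x \in proper_supplements <[z]> X.
Proof.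
move=> sS; rewrite !inE => /and4P[gx xX /eqP xZX xnX].
have sM : {in x &, forall a b, s (a * b) = s a * s b}.
  by move=> a b /(subsetP xX) aX /(subsetP xX) bX; apply: S_morph.
have sxX : s @: x \subset X by rewrite -(perm_imset_eq sS) imsetS.
have gsx : group_set (s @: x) by apply: group_set_imset.
rewrite gsx sxX /=; apply/andP; split.
  apply/eqP; rewrite joing_cycle // -[RHS](perm_imset_eq sS) -xZX joing_cycle //.
  rewrite (imset_mulg_in (S_morph sS) xX cycle_subX); congr (_ * _).
  by rewrite -[LHS]imset_id; apply: eq_in_imset => y /(cycle_fixed sS) ->.
apply: contra xnX => /eqP sxE; rewrite eqEcard xX /= -sxE card_imset //.
exact: perm_inj.
Qed.

Lemma acts_proper_supplements : [acts S, on proper_supplements <[z]> X | 'P^*].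
Proof.
apply/actsP=> s sS x; rewrite /= setactE; apply/idP/idP; last exact: perm_imset_supplement.
move/(perm_imset_supplement (groupVr sS)); rewrite -imset_comp.
by rewrite (eq_imset (g := id)) ?imset_id // => y /=; rewrite permK.
Qed.

Hypothesis S_faithful : forall s, s \in S -> {in X, forall x, s x = x} -> s = 1.

(* X = x0 <[z]> and S fixes z, so fixing x0 pointwise means fixing X pointwise. *)
Lemma supplement_faithful x0 s : x0 \in proper_supplements <[z]> X -> s \in S ->
  {in x0, forall y, s y = y} -> s = 1.
Proof.
rewrite inE => /and4P[gx0 x0X /eqP x0ZX _] sS s_fix; apply: S_faithful => // y.
rewrite -x0ZX joing_cycle // => /mulsgP[a b a_x0 b_z ->].
have aX := subsetP x0X a a_x0; have bX := subsetP cycle_subX b b_z.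
by rewrite S_morph // s_fix // cycle_fixed.
Qed.

End Supplements.
End PermGroupAction.

Section MoebiusDivisibility.
Variable gT : finGroupType.
Local Open Scope group_scope.

Lemma card_perm_group_dvd_mu (p : nat) (X : {group gT}) (S : {group {perm gT}}) :
  p.-group X -> p.-group S ->
  (forall s, s \in S -> {in X &, forall x y, s (x * y) = s x * s y}) ->
  (forall s, s \in S -> s @: X \subset X) ->
  (forall s, s \in S -> {in X, forall x, s x = x} -> s = 1) ->
  (#|S|%:Z %| mu X)%Z.
Proof.
elim: {X}_.+1 {-2}X (ltnSn #|X|) S => // n IH X Xn S pX pS S_morph S_X S_faithful.
have [X1 | nX] := eqVneq (X : {set gT}) 1.
  suff -> : #|S| = 1%N by apply: dvd1z.
  apply/eqP; rewrite -trivg_card1; apply/eqP/trivgP/subsetP=> s sS.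
  rewrite inE; apply/eqP; apply: S_faithful => // x; rewrite X1 inE => /eqP ->.
  exact: (in_morph1 (groupP X) (S_morph s sS)).
have [Phi1 | /mu_Phi_neq1 ->] := eqVneq 'Phi(X) 1; last exact: dvdz0.
have abelX : abelian X by apply: (abelem_abelian (p := p)); rewrite -trivg_Phi // Phi1.
have [z zX [nz z_fixed]] := exists_fixed_nontrivial S_morph S_X pX pS nX.
have nZ : <[z]> :!=: 1 by rewrite cycle_eq1.
rewrite (mu_proper_supplements nZ (cycle_subX zX)) rpredN.
have part := orbit_partition (acts_proper_supplements S_morph S_X zX z_fixed abelX).
rewrite -(cover_partition part) big_trivIset; last by case/and3P: part.
apply: rpred_sum => _ /imsetP[x0 x0C ->].
have := x0C; rewrite inE => /and4P[gx0 x0X _ nx0].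
have mu_orbit y : y \in orbit 'P^* S x0 -> mu y = mu x0.
  case/orbitP=> s sS <-; rewrite /= setactE.
  exact: (mu_imset (groupP X) (S_morph s sS) (in2W (@perm_inj _ s)) gx0 x0X).
set T := 'C_S[x0 | 'P^*]; have TS : T \subset S by apply: subsetIl.
rewrite (eq_bigr _ mu_orbit) sumr_const card_orbit -(Lagrange TS) -mulr_natr PoszM natz.
apply: dvdz_mul (dvdzz _); apply: (IH (Group gx0) _ [group of T]) => /=.
- by apply: leq_trans (proper_card _) Xn; rewrite properEneq nx0 x0X.
- exact: (pgroupS (H := Group gx0) x0X pX).
- exact: pgroupS TS pS.
- by move=> s /(subsetP TS) sS a b /(subsetP x0X) aX /(subsetP x0X) bX; apply: S_morph.
- by move=> s; rewrite inE => /andP[_ /astab1P]; rewrite /= setactE => ->.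
move=> s /(subsetP TS); exact: (supplement_faithful S_morph zX z_fixed abelX S_faithful x0C).
Qed.

End MoebiusDivisibility.

Section EulerCharacteristic.
Variable gT : finGroupType.
Implicit Types Q K L X : {set gT}.
Variables (P : {group gT}) (F : {set gT} -> {set gT} -> {set {ffun gT -> gT}}).
Hypothesis FS : fusion_system P F.
Local Notation sub := (subgp P).
Local Notation Ob := (Fstar_ob P).
Local Notation cls K := [set L in Ob | Fiso F K L].
Local Open Scope ring_scope.

Lemma Fstar_obP K : reflect (sub K /\ K != 1%g) (K \in Ob).
Proof. by rewrite inE; apply: andP. Qed.

Lemma Fstar_ob_sub K : K \in Ob -> sub K.
Proof. by case/Fstar_obP. Qed.

Lemma card_neq1 K : sub K -> K != 1%g -> #|K| != #|[1 gT]%g|.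
Proof.
move=> /andP[gK _] nK; apply: contra nK => /eqP KE; rewrite eq_sym eqEcard KE leqnn andbT.
by rewrite set1gE sub1set (group1 (Group gK)).
Qed.

Lemma Fiso_Fstar_ob K L : K \in Ob -> sub L -> Fiso F K L -> L \in Ob.
Proof.
case/Fstar_obP=> sK nK sL isoKL; apply/Fstar_obP; split=> //.
by apply: contraTneq (card_neq1 sK nK) => L1; rewrite (Fiso_card FS sK sL isoKL) L1 eqxx.
Qed.

Lemma Fiso_mu Q K : sub Q -> sub K -> Fiso F Q K -> mu Q = mu K.
Proof.
move=> sQ sK /exists_inP[f fF /eqP <-]; have [fM f_inj _ _] := F_homP FS sQ sK fF.
by have /andP[gQ _] := sQ; rewrite (mu_imset gQ fM f_inj gQ (subxx Q)).
Qed.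

Lemma sum_Fstar_ob (V : nmodType) (g : {set gT} -> V) : g 1%g = 0 ->
  \sum_(a in Ob) g a = \sum_(a : {set gT} | sub a) g a.
Proof.
move=> g1; rewrite [RHS](bigD1 1%g) /= ?subgp1 // g1 add0r.
by apply: eq_bigl => a; rewrite inE andbC.
Qed.

Lemma sum_card_Fisos_target K : sub K -> K != 1%g ->
  (\sum_(a in Ob) #|Fisos F a K| = #|F K P|)%N.
Proof.
move=> sK nK; rewrite (card_F_by_image FS sK (subgp_refl P)).
rewrite -(sum_Fstar_ob (g := fun a => #|Fisos F K a|)).
  by apply: eq_bigr => a /Fstar_ob_sub sa; apply: (card_Fisos_sym FS sa sK).
by rewrite (Fisos_eq0 FS sK (subgp1 P) (card_neq1 sK nK)) cards0.
Qed.

Lemma sum_mu_nontrivial b : sub b -> b != 1%g ->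
  \sum_(K : {set gT} | subgp b K && (K != 1%g)) mu K = - 1.
Proof.
move=> /andP[gb _] nb.
have b1 : [1 gT]%g \subset b by rewrite set1gE sub1set (group1 (Group gb)).
have := sum_mu_subgroups gb nb; rewrite (bigD1 1%g) /= ?group_set_one ?b1 // mu1.
move/eqP; rewrite addr_eq0 => /eqP ->; rewrite opprK.
by apply: eq_bigl => K; rewrite /subgp.
Qed.

Lemma coweighting_mu :
  coweighting Ob (fun a b => #|F a b|) (fun K => - (mu K)%:~R / (#|F K P|)%:R).
Proof.
move=> b bOb; have [sb nb] := Fstar_obP _ bOb.
under eq_bigr => a aOb do
  rewrite (card_F_by_image FS (Fstar_ob_sub aOb) sb) natr_sum mulr_sumr.
have trivial_image : forall K, subgp b K && (K == 1%g) ->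
    \sum_(a in Ob) - (mu a)%:~R / (#|F a P|)%:R * (#|Fisos F a K|)%:R = 0 :> rat.
  move=> K /andP[_ /eqP ->]; apply: big1 => a /Fstar_obP[sa na].
  by rewrite (Fisos_eq0 FS sa (subgp1 P) (card_neq1 sa na)) cards0 mulr0.
have image_term : forall K, subgp b K && (K != 1%g) ->
    \sum_(a in Ob) - (mu a)%:~R / (#|F a P|)%:R * (#|Fisos F a K|)%:R = - (mu K)%:~R :> rat.
  move=> K /andP[bK nK]; have sK := subgp_trans sb bK.
  rewrite (eq_bigr (fun a => - (mu K)%:~R / (#|F K P|)%:R * (#|Fisos F a K|)%:R)); last first.
    move=> a /Fstar_ob_sub sa; have [-> | nisos] := eqVneq (Fisos F a K) set0.
      by rewrite cards0 !mulr0.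
    have isoaK : Fiso F a K by rewrite FisoE.
    by rewrite (Fiso_mu sa sK isoaK) (card_F_Fiso FS sa sK (subgp_refl P) isoaK).
  rewrite -mulr_sumr -natr_sum sum_card_Fisos_target // divfK //.
  by rewrite pnatr_eq0 -lt0n; apply: (card_F_gt0 FS sK (subgp_refl P)); case/andP: sK.
rewrite exchange_big /= (bigID (fun K => K == 1%g)) /= (eq_bigr _ trivial_image).
rewrite big1_eq add0r (eq_bigr _ image_term) sumrN -rmorph_sum /= (sum_mu_nontrivial sb nb).
by rewrite rmorphN rmorph1 opprK.
Qed.

(* k^K := 1/|F(K,P)| - sum_{K < b} k^b, i.e. sum_{K <= b} k^b = 1/|F(K,P)|;
   the fuel #|P| - #|K| bounds the length of the chains of subgroups above K. *)
Fixpoint weight_rec (n : nat) (K : {set gT}) : rat :=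
  if n is n'.+1 then
    (#|F K P|%:R)^-1 - \sum_(b : {set gT} | (b \in Ob) && (K \proper b)) weight_rec n' b
  else 0.

Definition weight K := weight_rec (#|P| - #|K|).+1 K.

Lemma weight_rec_fuel n m K : K \subset P ->
  (#|P| - #|K| < n)%N -> (#|P| - #|K| < m)%N -> weight_rec n K = weight_rec m K.
Proof.
elim: n m K => [|n IH] [|m] K //= KP Kn Km; congr (_ - _).
apply: eq_bigr => b /andP[/Fstar_ob_sub/andP[_ bP] /proper_card Kb].
apply: IH => //; move: Kn Km Kb (subset_leq_card bP).
all: by move: #|P| #|K| #|b| => x y z; lia.
Qed.

Lemma sum_weight_above K : K \in Ob ->
  \sum_(b : {set gT} | (b \in Ob) && (K \subset b)) weight b = (#|F K P|%:R)^-1.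
Proof.
move=> KOb; have /andP[_ KP] := Fstar_ob_sub KOb.
rewrite (bigD1 K) /= ?KOb ?subxx //.
have -> : weight K = (#|F K P|%:R)^-1 - \sum_(b | (b \in Ob) && (K \proper b)) weight b.
  rewrite {1}/weight /=; congr (_ - _); apply: eq_bigr => b /andP[/Fstar_ob_sub/andP[_ bP] Kb].
  apply: weight_rec_fuel => //; move: (proper_card Kb) (subset_leq_card bP) (subset_leq_card KP).
  by move: #|P| #|K| #|b| => x y z; lia.
rewrite [X in _ + X = _](eq_bigl (fun b => (b \in Ob) && (K \proper b))) ?subrK // => b.
by rewrite properEneq eq_sym; case: (b \in Ob); rewrite //= andbC.
Qed.

Lemma weighting_weight : weighting Ob (fun a b => #|F a b|) weight.
Proof.
move=> a aOb; have sa := Fstar_ob_sub aOb.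
under eq_bigr => b bOb do rewrite (card_F_by_image FS sa (Fstar_ob_sub bOb)) natr_sum mulr_suml.
rewrite (exchange_big_dep sub) /= => [|b K /Fstar_ob_sub sb bK]; last exact: subgp_trans sb bK.
rewrite (eq_bigr (fun K => (#|Fisos F a K|)%:R * (#|F a P|%:R)^-1)) => [|K sK]; last first.
  rewrite -mulr_sumr; have [-> | nisos] := eqVneq (Fisos F a K) set0.
    by rewrite cards0 !mul0r.
  have isoaK : Fiso F a K by rewrite FisoE.
  have KOb := Fiso_Fstar_ob aOb sK isoaK.
  rewrite -(card_F_Fiso FS sa sK (subgp_refl P) isoaK) -(sum_weight_above KOb); congr (_ * _).
  apply: eq_bigl => b; case: (b \in Ob) => //=; rewrite /subgp.
  by case/andP: sK => ->.
rewrite -mulr_suml -natr_sum -(card_F_by_image FS sa (subgp_refl P)) divff //.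
by rewrite pnatr_eq0 -lt0n; apply: (card_F_gt0 FS sa (subgp_refl P)); case/andP: sa.
Qed.

Lemma in_Fstar_class K L : (L \in cls K) = (L \in Ob) && Fiso F K L.
Proof. by rewrite !inE. Qed.

Lemma Fstar_class_eq a K : a \in Ob -> K \in Ob -> (cls a == cls K) = Fiso F K a.
Proof.
move=> aOb KOb; have sa := Fstar_ob_sub aOb; have sK := Fstar_ob_sub KOb.
apply/eqP/idP=> [clsE | isoKa].
  have : a \in cls a by rewrite in_Fstar_class aOb (Fiso_refl FS sa).
  by rewrite clsE in_Fstar_class => /andP[].
apply/setP=> L; rewrite !in_Fstar_class; case LOb: (L \in Ob) => //=; have sL := Fstar_ob_sub LOb.
apply/idP/idP; first exact: (Fiso_trans FS sK sa sL).
exact: (Fiso_trans FS sa sK sL (Fiso_sym FS sK sa isoKa)).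
Qed.

Lemma class_repP C : C \in Fstar_classes P F ->
  class_rep C \in Ob /\ C = cls (class_rep C).
Proof.
case/imsetP=> K KOb ->; rewrite /class_rep.
case: pickP => [r | /(_ K)]; last by rewrite in_Fstar_class KOb (Fiso_refl FS (Fstar_ob_sub KOb)).
rewrite in_Fstar_class => /andP[rOb isoKr] /=; split=> //.
by apply/eqP; rewrite eq_sym Fstar_class_eq.
Qed.

Lemma card_F_Fstar_class r : r \in Ob -> #|F r P| = (#|cls r| * #|F r r|)%N.
Proof.
move=> rOb; have sr := Fstar_ob_sub rOb.
rewrite (card_F_by_image FS sr (subgp_refl P)) -sum1_card big_distrl /=.
rewrite (bigID (Fiso F r)) /= addnC big1 ?add0n => [|K /andP[_ nisos]]; last first.
  by apply/eqP; rewrite cards_eq0; apply: contraNT nisos; rewrite FisoE.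
rewrite [RHS](eq_bigl (fun K => sub K && Fiso F r K)) => [|K]; last first.
  rewrite in_Fstar_class; apply/andP/andP=> [[/Fstar_ob_sub sK ->] // | [sK isorK]].
  by rewrite (Fiso_Fstar_ob rOb sK isorK).
apply: eq_bigr => K /andP[sK isorK]; rewrite mul1n (card_Fisos_sym FS sr sK).
rewrite (Fisos_full FS sK sr) ?(card_F_Fiso FS sr sK sr isorK) //.
by rewrite (Fiso_card FS sr sK isorK).
Qed.

Lemma sum_coweighting_classes :
  \sum_(a in Ob) - (mu a)%:~R / (#|F a P|)%:R =
  \sum_(C in Fstar_classes P F)
     (- (mu (class_rep C))%:~R / (#|F (class_rep C) (class_rep C)|)%:R : rat).
Proof.
rewrite (partition_big_imset (fun K => cls K)) /=.
apply: eq_bigr => C CC; have [rOb eC] := class_repP CC.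
set r := class_rep C in rOb eC *; have sr := Fstar_ob_sub rOb.
rewrite (eq_bigr (fun _ => - (mu r)%:~R / (#|F r P|)%:R)) => [|a /andP[aOb]]; last first.
  rewrite eC Fstar_class_eq // => isora; have sa := Fstar_ob_sub aOb.
  by rewrite (Fiso_mu sr sa isora) (card_F_Fiso FS sr sa (subgp_refl P) isora).
rewrite sumr_const; have -> : #|[pred a | (a \in Ob) && (cls a == C)]| = #|cls r|.
  apply: eq_card => a; rewrite in_Fstar_class /= unfold_in /=; case aOb: (a \in Ob) => //=.
  by rewrite eC Fstar_class_eq.
have cls_gt0 : (#|cls r|)%:R != 0 :> rat.
  rewrite pnatr_eq0 -lt0n; apply/card_gt0P.
  by exists r; rewrite in_Fstar_class rOb (Fiso_refl FS sr).
have Aut_gt0 : (#|F r r|)%:R != 0 :> rat.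
  by rewrite pnatr_eq0 -lt0n; apply: (card_F_gt0 FS sr sr).
by rewrite card_F_Fstar_class // natrM -mulr_natr; field; rewrite cls_gt0 Aut_gt0.
Qed.

End EulerCharacteristic.

Section PLocal.
Local Open Scope ring_scope.
Variable p : nat.
Hypothesis p_pr : prime p.

Lemma p_local_frac (n d : int) : ~~ (p %| `|d|)%N -> p_local_integer p (n%:~R / d%:~R).
Proof.
rewrite /p_local_integer; case: (divqP n d) => [| k x _]; first by rewrite dvdn0.
by rewrite abszM Euclid_dvdM // negb_or => /andP[].
Qed.

Lemma p_local0 : p_local_integer p 0.
Proof. by rewrite /p_local_integer (_ : denq 0 = 1) // dvdn1; case: eqP p_pr => // ->. Qed.

Lemma p_localD x y : p_local_integer p x -> p_local_integer p y -> p_local_integer p (x + y).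
Proof.
rewrite /p_local_integer => px py.
have -> : x + y = (numq x * denq y + numq y * denq x)%:~R / (Posz (`|denq x| * `|denq y|))%:~R.
  have dx : (denq x)%:~R != 0 :> rat by rewrite intr_eq0 denq_neq0.
  have dy : (denq y)%:~R != 0 :> rat by rewrite intr_eq0 denq_neq0.
  rewrite PoszM !abszE.
  rewrite !gtr0_norm ?denq_gt0 // -{1}(divq_num_den x) -{1}(divq_num_den y).
  by rewrite rmorphD /= !rmorphM /=; field; rewrite dx dy.
by apply: p_local_frac; rewrite Euclid_dvdM // negb_or px py.
Qed.

Lemma p_local_sum (I : finType) (A : pred I) (f : I -> rat) :
  (forall i, A i -> p_local_integer p (f i)) -> p_local_integer p (\sum_(i | A i) f i).
Proof.
by move=> pf; apply: (big_ind (p_local_integer p)) => //; [apply: p_local0 | apply: p_localD].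
Qed.

Lemma p_local_div_part (m : int) (N : nat) : (0 < N)%N -> ((N`_p)%:Z %| m)%Z ->
  p_local_integer p (- m%:~R / N%:R).
Proof.
move=> N_gt0 /dvdzP[q ->].
have Np0 : (N`_p)%:R != 0 :> rat by rewrite pnatr_eq0 -lt0n part_gt0.
have Np'0 : (N`_(p^'))%:R != 0 :> rat by rewrite pnatr_eq0 -lt0n part_gt0.
have -> : - (q * (N`_p)%:Z)%:~R / N%:R = (- q)%:~R / (Posz (N`_(p^')))%:~R :> rat.
  rewrite -[in X in _ / X](partnC p N_gt0) natrM rmorphN rmorphM /=.
  have e1 : ((N`_p)%:Z)%:~R = (N`_p)%:R :> rat by [].
  have e2 : ((N`_(p^'))%:Z)%:~R = (N`_(p^'))%:R :> rat by [].
  by rewrite e1 e2 mulNr; field; rewrite Np0 Np'0.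
by apply: p_local_frac; rewrite -p'natE // part_pnat.
Qed.

End PLocal.

Section AutF.
Variable gT : finGroupType.
Local Open Scope group_scope.
Variables (P : {group gT}) (F : {set gT} -> {set gT} -> {set {ffun gT -> gT}}).
Hypothesis FS : fusion_system P F.
Local Notation sub := (subgp P).

Lemma AutFP Q (s : {perm gT}) : sub Q -> s \in AutF F Q ->
  [/\ {in Q &, forall x y, s (x * y) = s x * s y}, {in Q, forall x, s x \in Q},
      forall x, x \notin Q -> s x = x & restrict Q s \in F Q Q].
Proof.
move=> sQ; rewrite inE => /andP[sF /forall_inP s_out].
have [sM _ sQQ _] := F_homP FS sQ sQ sF; have /andP[gQ _] := sQ.
split=> // [x y xQ yQ | x xQ | x xQ]; last by apply/eqP; apply: s_out; rewrite inE.
  by have := sM x y xQ yQ; rewrite !ffunE xQ yQ (groupM (G := Group gQ)).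
by have := sQQ x xQ; rewrite ffunE xQ.
Qed.

Lemma group_set_AutF Q : sub Q -> group_set (AutF F Q).
Proof.
move=> sQ; apply/group_setP; split.
  rewrite inE (_ : restrict Q (1 : {perm gT}) = restrict Q id); last first.
    by apply/ffunP=> x; rewrite !ffunE perm1.
  by rewrite (incl_in_F FS sQ sQ) //=; apply/forall_inP=> x _; rewrite perm1.
move=> s t sA tA; have [_ sQQ s_out sF] := AutFP sQ sA; have [_ _ t_out tF] := AutFP sQ tA.
rewrite inE; apply/andP; split.
  suff -> : restrict Q (s * t) = compmap Q (restrict Q s) (restrict Q t).
    exact: (fs_comp FS sQ sQ sQ sF tF).
  by apply/ffunP=> x; rewrite /compmap !ffunE permM; case: ifP => // xQ; rewrite sQQ.
by apply/forall_inP=> x; rewrite inE permM => xQ; rewrite s_out // t_out.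
Qed.

(* Elements of Aut_F(Q) are determined by their restriction to Q. *)
Lemma card_AutF Q : sub Q -> #|AutF F Q| = #|F Q Q|.
Proof.
move=> sQ; have restr_inj : {in AutF F Q &, injective (fun s : {perm gT} => restrict Q s)}.
  move=> s t sA tA e; apply/permP=> x.
  have [_ _ s_out _] := AutFP sQ sA; have [_ _ t_out _] := AutFP sQ tA.
  case xQ: (x \in Q); last by rewrite s_out ?t_out ?xQ.
  by have := congr1 (fun f : {ffun gT -> gT} => f x) e; rewrite !ffunE xQ.
rewrite -(card_in_imset restr_inj).
suff -> : [set restrict Q s | s : {perm gT} in AutF F Q] = F Q Q by [].
apply/setP=> f.
apply/imsetP/idP=> [[s sA ->] | fF]; first by have [] := AutFP sQ sA.
have [_ f_inj fQ f_out] := F_homP FS sQ sQ fF.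
pose g := [ffun x => if x \in Q then f x else x].
have g_inj : injective g.
  move=> x y; rewrite !ffunE.
  case xQ: (x \in Q); case yQ: (y \in Q) => //; first exact: f_inj.
    by move=> fxy; have := fQ x xQ; rewrite fxy yQ.
  by move=> fxy; have := fQ y yQ; rewrite -fxy xQ.
have gE : restrict Q (perm g_inj) = f.
  apply/ffunP=> x; rewrite !ffunE permE ffunE.
  by case xQ: (x \in Q) => //; rewrite f_out ?xQ.
exists (perm g_inj) => //; rewrite inE gE fF.
by apply/forall_inP=> x; rewrite inE permE ffunE => /negPf ->.
Qed.

Lemma part_card_F_dvd_mu (p : nat) K : p.-group P -> sub K -> (((#|F K K|)`_p)%:Z %| mu K)%Z.
Proof.
move=> pP sK; have /andP[gK KP] := sK; have [S sylS] := Sylow_exists p (Group (group_set_AutF sK)).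
rewrite -(card_AutF sK) -[#|AutF F K|]/(#|Group (group_set_AutF sK)|) -(card_Hall sylS).
have /andP[SA _] := sylS; have S_AutF s : s \in S -> s \in AutF F K := subsetP SA s.
apply: (card_perm_group_dvd_mu (X := Group gK)) => [||s /S_AutF sA|s /S_AutF sA|s /S_AutF sA s_fix].
- exact: (pgroupS (H := Group gK) KP pP).
- exact: pHall_pgroup sylS.
- by have [] := AutFP sK sA.
- by have [_ sKK _ _] := AutFP sK sA; apply/subsetP=> _ /imsetP[x xK ->]; apply: sKK.
have [_ _ s_out _] := AutFP sK sA; apply/permP=> x; rewrite perm1.
by case xK: (x \in K); [apply: s_fix | rewrite s_out ?xK].
Qed.

End AutF.

Local Open Scope ring_scope.

Theorem theorem7p2 (gT : finGroupType) (p : nat) (P : {group gT})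
    (F : {set gT} -> {set gT} -> {set {ffun gT -> gT}}) :
  prime p -> (p.-group P)%g -> saturated p P F ->
  let Ob := Fstar_ob P in
  let hom := fun a b => #|F a b|%N in
  let chi := \sum_(C in Fstar_classes P F)
               (- (mu (class_rep C))%:~R / (#|F (class_rep C) (class_rep C)|)%:R : rat) in
  coweighting Ob hom (fun K => - (mu K)%:~R / (#|F K P|)%:R)
  /\ euler_char Ob hom chi
  /\ p_local_integer p chi.
Proof.
move=> p_pr pP sat Ob hom chi; have FS := sat_fs sat.
have cow := coweighting_mu FS; split=> //; split.
  split; first by exists (weight P F); apply: weighting_weight FS.
  by exists (fun K => - (mu K)%:~R / (#|F K P|)%:R) => //; apply: sum_coweighting_classes.
apply: (p_local_sum p_pr) => C /(class_repP FS)[rOb _]; have sr := Fstar_ob_sub rOb.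
apply: (p_local_div_part p_pr); first by apply: (card_F_gt0 FS sr sr); rewrite subxx.
exact (part_card_F_dvd_mu FS pP sr).
Qed.
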